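(* For all partial Boolean functions $f:D\to\{0,1\}$ with $D\subseteq\{0,1\}^n$, we have $\mathrm{QS}(f)=O(\mathrm{RS}(f))$.
   Context: Quantum query model: for $x\in\{0,1\}^n$ the oracle $O_x$ acts by $O_x|i,b\rangle=|i,b\oplus x_i\rangle$. A $T$-query quantum algorithm applies input-independent unitaries $U_0,\dots,U_T$ interleaved with $O_x$ to $|0^m\rangle$ and may output the state obtained by tracing out a fixed subset of qubits. The trace distance is $\|\rho-\sigma\|_{tr}=\tfrac12\|\rho-\sigma\|_1$. $\mathrm{QS}(f)$ is the smallest $k$ such that some $k$-query quantum algorithm outputs states $\rho_x$ ($x\in D$) with $\|\rho_x-\rho_y\|_{tr}\ge 1/6$ whenever $f(x)\ne f(y)$. Sabotaged inputs: for $x,y\in D$ with $f(x)\ne f(y)$, let $p\in\{0,1,*\}^n$ have $p_i=x_i$ if $x_i=y_i$ and $p_i=*$ otherwise. Let $S_*$ be the set of all such $p$, and let $S_\dagger\subseteq\{0,1,\dagger\}^n$ be the same set with $*$ replaced by $\dagger$. Let $f_{\mathrm{sab}}:S_*\cup S_\dagger\to\{0,1\}$ output whether its input contains $*$ symbols or $\dagger$ symbols. $\mathrm{R}_0(g)$ is the minimum, over zero-error randomized query algorithms for $g$ (always correct), of the worst-case expected number of queries. The randomized sabotage complexity is $\mathrm{RS}(f)=\mathrm{R}_0(f_{\mathrm{sab}})$. *)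

From HB Require Import structures.
From mathcomp Require Import all_boot all_order all_algebra.
From mathcomp Require Import classical_sets reals.
From mathcomp Require Import complex.
From Stdlib Require List.

Set Implicit Arguments.
Unset Strict Implicit.
Unset Printing Implicit Defensive.

Import Order.TTheory GRing.Theory Num.Theory Num.Def.
Local Open Scope ring_scope.

Section TraceNorm.
Variable C : numClosedFieldType.

Definition adjmx (m : nat) (A : 'M[C]_m) : 'M[C]_m := (map_mx Num.conj A)^T.

(* the eigenvalues (with multiplicity) of a square matrix: the roots of its
   characteristic polynomial, which splits since C is algebraically closed *)
Definition eigenvalues (m : nat) (A : 'M[C]_m) : seq C :=
  projT1 (closed_field_poly_normal (char_poly A)).

(* trace norm ||A||_1 = tr sqrt(A^* A) = sum of the singular values of A *)
Definition trace_norm (m : nat) (A : 'M[C]_m) : C :=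
  \sum_(z <- eigenvalues (adjmx A *m A)) 2.-root z.

End TraceNorm.

Section Quantum.
Variable R : realType.
Local Notation C := R[i].
Variable n : nat.

(* Registers: query index register 'I_n.+1 (index n is a padding value on
   which the oracle acts trivially), query answer bit, and a workspace
   'I_a.+1 * 'I_b.+1; at the end the 'I_b.+1 part is traced out. *)
Definition kept_space (a : nat) := ('I_n.+1 * bool * 'I_a.+1)%type.
Definition qspace (a b : nat) := ('I_n.+1 * bool * ('I_a.+1 * 'I_b.+1))%type.

Variables a b : nat.
Local Notation S := (qspace a b).
Local Notation K := (kept_space a).

Definition apply_op (U : S -> S -> C) (v : S -> C) : S -> C :=
  fun s => \sum_(t : S) U s t * v t.

Definition unitary (U : S -> S -> C) : Prop :=
  forall s t : S, \sum_(u : S) Num.conj (U u s) * U u t = (s == t)%:R.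

Definition oracle_map (x : {ffun 'I_n -> bool}) (s : S) : S :=
  match s with
  | (i, c, z) =>
      match unlift ord_max i with
      | Some j => (i, c (+) x j, z)
      | None => (i, c, z)
      end
  end.

Definition oracle (x : {ffun 'I_n -> bool}) : S -> S -> C :=
  fun s t => (s == oracle_map x t)%:R.

Definition init_state : S -> C :=
  fun s => (s == (ord0, false, (ord0, ord0)))%:R.

Fixpoint run (U : nat -> S -> S -> C) (x : {ffun 'I_n -> bool}) (t : nat)
  : S -> C :=
  match t with
  | 0 => apply_op (U 0%N) init_state
  | t'.+1 => apply_op (U t) (apply_op (oracle x) (run U x t'))
  end.

Definition reduced_state (psi : S -> C) : 'M[C]_#|{: K}| :=
  \matrix_(i, j)
    let k := enum_val i in let k' := enum_val j in
    \sum_(c : 'I_b.+1) psi (k.1, (k.2, c)) * Num.conj (psi (k'.1, (k'.2, c))).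

Definition output_state (U : nat -> S -> S -> C) (T : nat)
  (x : {ffun 'I_n -> bool}) : 'M[C]_#|{: K}| :=
  reduced_state (run U x T).

End Quantum.

Definition trace_dist (C : numClosedFieldType) (m : nat) (rho sigma : 'M[C]_m) : C :=
  (trace_norm (rho - sigma)) / 2.

Definition QS_algorithm_exists (R : realType) (n : nat)
  (D : {set {ffun 'I_n -> bool}}) (f : {ffun 'I_n -> bool} -> bool) (T : nat)
  : Prop :=
  exists (a b : nat) (U : nat -> qspace n a b -> qspace n a b -> R[i]),
    (forall t, (t <= T)%N -> unitary (U t)) /\
    forall x y, x \in D -> y \in D -> f x != f y ->
      1 / 6 <= trace_dist (output_state U T x) (output_state U T y).

Definition QS (R : realType) (n : nat) (D : {set {ffun 'I_n -> bool}})
  (f : {ffun 'I_n -> bool} -> bool) : R :=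
  inf [set (T%:R : R) | T in [set T : nat | QS_algorithm_exists R D f T]].

Inductive sym := sym0 | sym1 | symstar | symdag.

Definition sym_to_ord (s : sym) : 'I_4 :=
  match s with
  | sym0 => inord 0 | sym1 => inord 1 | symstar => inord 2 | symdag => inord 3
  end.
Definition ord_to_sym (i : 'I_4) : sym :=
  match val i with 0 => sym0 | 1 => sym1 | 2 => symstar | _ => symdag end.
Lemma sym_to_ordK : cancel sym_to_ord ord_to_sym.
Proof. by case; rewrite /ord_to_sym /= inordK. Qed.

HB.instance Definition _ := Finite.copy sym (can_type sym_to_ordK).

Definition of_bool (c : bool) : sym := if c then sym1 else sym0.

Definition sabotage (n : nat) (x y : {ffun 'I_n -> bool}) (s : sym)
  : {ffun 'I_n -> sym} :=
  [ffun i => if x i == y i then of_bool (x i) else s].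

Definition sab_domain (n : nat) (D : {set {ffun 'I_n -> bool}})
  (f : {ffun 'I_n -> bool} -> bool) : {set {ffun 'I_n -> sym}} :=
  [set z | [exists x in D, exists y in D,
             (f x != f y) &&
             ((z == sabotage x y symstar) || (z == sabotage x y symdag))]].

Definition f_sab (n : nat) (z : {ffun 'I_n -> sym}) : bool :=
  [exists i, z i == symstar].

Inductive dtree (n : nat) :=
  | Leaf of bool
  | Query of 'I_n & (sym -> dtree n).

Fixpoint dt_eval (n : nat) (t : dtree n) (z : {ffun 'I_n -> sym}) : bool :=
  match t with
  | Leaf c => c
  | Query i k => dt_eval (k (z i)) z
  end.

Fixpoint dt_cost (n : nat) (t : dtree n) (z : {ffun 'I_n -> sym}) : nat :=
  match t with
  | Leaf _ => 0
  | Query i k => (dt_cost (k (z i)) z).+1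
  end.

(* a randomized query algorithm: a finitely supported probability
   distribution over deterministic decision trees *)
Definition rand_alg (R : realType) (n : nat) := seq (R * dtree n).

Definition zero_error_alg (R : realType) (n : nat) (A : rand_alg R n)
  (dom : {set {ffun 'I_n -> sym}}) (g : {ffun 'I_n -> sym} -> bool) : Prop :=
  (forall p, List.In p A -> 0 <= p.1) /\
  \sum_(p <- A) p.1 = 1 /\
  (forall p, List.In p A -> 0 < p.1 -> forall z, z \in dom -> dt_eval p.2 z = g z).

Definition expected_cost (R : realType) (n : nat) (A : rand_alg R n)
  (z : {ffun 'I_n -> sym}) : R :=
  \sum_(p <- A) p.1 * (dt_cost p.2 z)%:R.

Definition worst_expected_cost (R : realType) (n : nat) (A : rand_alg R n)
  (dom : {set {ffun 'I_n -> sym}}) : R :=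
  \big[Num.max/0]_(z in dom) expected_cost A z.

Definition R0 (R : realType) (n : nat) (dom : {set {ffun 'I_n -> sym}})
  (g : {ffun 'I_n -> sym} -> bool) : R :=
  inf [set worst_expected_cost A dom | A in [set A : rand_alg R n |
                                               zero_error_alg A dom g]].

Definition RS (R : realType) (n : nat) (D : {set {ffun 'I_n -> bool}})
  (f : {ffun 'I_n -> bool} -> bool) : R :=
  R0 R (sab_domain D f) (@f_sab n).

From mathcomp Require Import all_boot all_order all_algebra.
From mathcomp Require Import classical_sets reals.
From mathcomp Require Import complex.
From mathcomp Require Import ring lra.
Import Order.TTheory GRing.Theory Num.Theory.
Local Open Scope ring_scope.

Set Implicit Arguments.
Unset Strict Implicit.
Unset Printing Implicit Defensive.

(** A zero-error randomized algorithm for f_sab, of expected cost E, is run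
    coherently for T = floor(2E) queries: a reflection prepares the
    purification sum_v sqrt(p_v) |v>|v> of its distribution over decision
    trees, and each tree is then simulated reversibly, the answers it receives
    being recorded in the workspace.  The kept registers end up in the
    classical mixture over v of (tree v, its first T answers).  If
    f(x) <> f(y), a correct tree tells the *-sabotaged input from the
    dagger-sabotaged one, so before stopping it must have queried a position
    where x and y differ: every tree that stops within T queries on the
    *-input records different answers on x and on y.  By Markov's inequality
    these trees carry probability at least 1/2, hence the two output states
    are at trace distance at least 1/4, and QS(f) <= 2 RS(f). *)

Lemma sum_delta (I : finType) (V : pzSemiRingType) (F : I -> V) (s : I) :
  \sum_t (t == s)%:R * F t = F s.
Proof.
rewrite (bigD1 s) //= eqxx mul1r big1 ?addr0 // => t /negbTE ->.
by rewrite mul0r.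
Qed.

Lemma conj_delta_mul (C : numClosedFieldType) (c : bool) (z : C) :
  Num.conj (c%:R * z) * (c%:R * z) = c%:R * (Num.conj z * z).
Proof. by case: c; rewrite ?mul1r ?mul0r ?rmorph0 ?mul0r // rmorph1 mul1r. Qed.

Lemma In_seq_nth (X : Type) (x0 : X) (s : seq X) i :
  (i < size s)%N -> List.In (nth x0 s i) s.
Proof. by elim: s i => [|x s IH] [|i] //= lt_i_s; [left | right; apply: IH]. Qed.

Lemma sum_enum_val_delta (K : finType) (V : pzSemiRingType) (F : K -> V) k :
  \sum_(i < #|{: K}|) (enum_val i == k)%:R * F (enum_val i) = F k.
Proof.
rewrite (bigD1 (enum_rank k)) //= enum_rankK eqxx mul1r big1 ?addr0 // => i ne_i.
rewrite (_ : _ == _ = false) ?mul0r //; apply: contraNF ne_i => /eqP <-.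
by rewrite enum_valK.
Qed.

Lemma markov_nat (R : realFieldType) (I : finType) (p : I -> R) (c : I -> nat)
    (T : nat) :
  (forall v, 0 <= p v) ->
  \sum_(v | (T < c v)%N) p v <= (\sum_v p v * (c v)%:R) / T.+1%:R.
Proof.
move=> p_ge0; rewrite mulr_suml big_mkcond /=; apply: ler_sum => v _.
case: ltnP => [lt_T_c | _]; last by rewrite divr_ge0 ?mulr_ge0.
by rewrite ler_pdivlMr ?ltr0n // ler_wpM2l // ler_nat.
Qed.

Lemma markov_half_mass (R : realFieldType) (I : finType) (p : I -> R)
    (c : I -> nat) (E : R) (T : nat) :
  (forall v, 0 <= p v) -> \sum_v p v = 1 -> \sum_v p v * (c v)%:R <= E ->
  2 * E < T.+1%:R ->
  1 / 2 <= \sum_(v | (c v <= T)%N) p v.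
Proof.
move=> p_ge0 p_sum1 cost_le lt_ET.
have tail_lt : \sum_(v | (T < c v)%N) p v < 1 / 2.
  apply: le_lt_trans (markov_nat c T p_ge0) _.
  by rewrite ltr_pdivrMr ?ltr0n //; apply: le_lt_trans cost_le _; lra.
have split_mass : \sum_(v | (c v <= T)%N) p v + \sum_(v | (T < c v)%N) p v = 1.
  rewrite -p_sum1 [RHS](bigID (fun v => (c v <= T)%N)) /=.
  by congr (_ + _); apply: eq_bigl => v; rewrite ltnNge.
lra.
Qed.

Section Operators.
Variable R : realType.
Local Notation C := R[i].
Variables n a b : nat.
Local Notation S := (qspace n a b).

Definition perm_op (pi : S -> S) : S -> S -> C := fun s t => (s == pi t)%:R.

Lemma unitary_perm_op pi : injective pi -> unitary (perm_op pi).
Proof.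
move=> pi_inj s t; rewrite /perm_op.
under eq_bigr => u _ do rewrite rmorph_nat.
by rewrite sum_delta (inj_eq pi_inj).
Qed.

Lemma apply_perm_op (I : finType) pi (sig : I -> S) (amp : I -> C) s :
  apply_op (perm_op pi) (fun s => \sum_v (s == sig v)%:R * amp v) s =
  \sum_v (s == pi (sig v))%:R * amp v.
Proof.
rewrite /apply_op /perm_op.
under eq_bigr => t _ do rewrite mulr_sumr.
rewrite exchange_big /=; apply: eq_bigr => v _.
under eq_bigr => t _ do rewrite mulrCA.
exact: (sum_delta (fun t => (s == pi t)%:R * amp v)).
Qed.

Definition reflection (w : S -> C) : S -> S -> C :=
  fun s t => (s == t)%:R - w s * Num.conj (w t).

Lemma unitary_reflection w :
  \sum_u Num.conj (w u) * w u = 2 -> unitary (reflection w).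
Proof.
move=> w_norm2 s t; rewrite /reflection.
under eq_bigr => u _ do
  rewrite rmorphB rmorph_nat rmorphM /= conjCK mulrBl !mulrBr.
rewrite !sumrB sum_delta (sum_delta (fun u => w u * Num.conj (w t))).
have -> : \sum_u Num.conj (w u) * w s * (u == t)%:R = Num.conj (w t) * w s.
  rewrite -(sum_delta (fun u => Num.conj (w u) * w s) t).
  by apply: eq_bigr => u _; rewrite mulrC.
have -> : \sum_u Num.conj (w u) * w s * (w u * Num.conj (w t)) =
          2 * (w s * Num.conj (w t)).
  by rewrite -w_norm2 mulr_suml; apply: eq_bigr => u _; ring.
ring.
Qed.

Lemma superposition_single (I : finType) (sig : I -> S) key (amp : I -> C) s :
  cancel sig key ->
  \sum_v (s == sig v)%:R * amp v = (s == sig (key s))%:R * amp (key s).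
Proof.
move=> sigK; rewrite (bigD1 (key s)) //= big1 ?addr0 // => v ne_v.
suff -> : (s == sig v) = false by rewrite mul0r.
by apply: contraNF ne_v => /eqP ->; rewrite sigK.
Qed.

Lemma sum_superposition_single (I : finType) (sig : I -> S) key (F : I -> C) :
  cancel sig key -> \sum_s (s == sig (key s))%:R * F (key s) = \sum_v F v.
Proof.
move=> sigK; under eq_bigr => s _ do rewrite -(superposition_single F s sigK).
rewrite exchange_big /=; apply: eq_bigr => v _.
exact: (sum_delta (fun s => F v) (sig v)).
Qed.

End Operators.

Arguments perm_op {R n a b} pi.

Lemma submxE (V : zmodType) m n (A B : 'M[V]_(m, n)) i j :
  (A - B) i j = A i j - B i j.
Proof. by rewrite !mxE. Qed.

Lemma trace_norm_diag (C : numClosedFieldType) m (M : 'M[C]_m) :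
  (forall i j, i != j -> M i j = 0) -> trace_norm M = \sum_i `|M i i|.
Proof.
move=> M_diag.
set P := adjmx M *m M.
have P_diag i j : P i j = (i == j)%:R * (Num.conj (M i i) * M i i).
  rewrite /P /adjmx !mxE (bigD1 i) //= big1 ?addr0.
    rewrite !mxE; case: (eqVneq i j) => [<-|ne_ij]; first by rewrite mul1r.
    by rewrite (M_diag i j ne_ij) mulr0 mul0r.
  by move=> k ne_ki; rewrite !mxE (M_diag k i ne_ki) conjC0 mul0r.
have P_trig : is_trig_mx P.
  apply/is_trig_mxP => i j lt_ij; rewrite P_diag.
  by rewrite (_ : i == j = false) ?mul0r // -val_eqE /= ltn_eqF.
have charP := char_poly_trig P_trig.
rewrite /trace_norm /eigenvalues.
case: closed_field_poly_normal => s /= Hs.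
have lead1 : lead_coef (char_poly P) = 1.
  by rewrite charP; apply/monicP; apply: monic_prod_XsubC.
rewrite lead1 scale1r charP in Hs.
have s_perm : perm_eq s [seq P i i | i <- enum 'I_m].
  by apply: prod_XsubC_eq; rewrite -Hs big_map big_enum.
rewrite (perm_big _ s_perm) /= big_map big_enum /=.
by apply: eq_bigr => i _; rewrite P_diag eqxx mul1r -normCKC sqrCK.
Qed.

Lemma trace_norm_diag_ge (C : numClosedFieldType) m (M : 'M[C]_m) (B : pred 'I_m) :
  (forall i j, i != j -> M i j = 0) -> (forall i, M i i \is Num.real) ->
  \sum_i (B i)%:R * M i i <= trace_norm M.
Proof.
move=> M_diag M_real; rewrite trace_norm_diag //; apply: ler_sum => i _.
by case: (B i); rewrite ?mul1r ?real_ler_norm ?mul0r.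
Qed.

Section DecisionTreeRuns.
Variable n : nat.
Implicit Types (t : dtree n) (x y : {ffun 'I_n -> bool}).

(** [ord_max] encodes "no query": it is returned once [t] has reached a leaf. *)
Fixpoint dt_query t (ans : nat -> bool) (k : nat) : 'I_n.+1 :=
  match t with
  | Leaf _ => ord_max
  | Query i f => match k with
                 | 0 => lift ord_max i
                 | k'.+1 => dt_query (f (of_bool (ans 0%N))) (fun s => ans s.+1) k'
                 end
  end.

Fixpoint dt_answer t x (k : nat) : bool :=
  match t with
  | Leaf _ => false
  | Query i f => match k with
                 | 0 => x i
                 | k'.+1 => dt_answer (f (of_bool (x i))) x k'
                 end
  end.

Definition oracle_bit x (q : 'I_n.+1) : bool :=
  if unlift ord_max q is Some j then x j else false.

Definition dt_transcript (T : nat) t x (k : nat) : {ffun 'I_T -> bool} :=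
  [ffun u : 'I_T => (u < k)%N && dt_answer t x u].

Lemma dt_query_ext t ans1 ans2 k :
  (forall s, (s < k)%N -> ans1 s = ans2 s) -> dt_query t ans1 k = dt_query t ans2 k.
Proof.
elim: k t ans1 ans2 => [|k IH] [c|i f] ans1 ans2 eq_ans //=.
by rewrite eq_ans //; apply: IH => s lt_sk; apply: eq_ans.
Qed.

Lemma oracle_bit_dt_query t x k :
  oracle_bit x (dt_query t (dt_answer t x) k) = dt_answer t x k.
Proof.
elim: k t => [|k IH] [c|i f] /=; rewrite /oracle_bit ?unlift_none ?liftK //.
exact: IH.
Qed.

Lemma oracle_mapE a b x q c (z : 'I_a.+1 * 'I_b.+1) :
  oracle_map x ((q, c), z) = ((q, c (+) oracle_bit x q), z).
Proof. by rewrite /oracle_map /oracle_bit; case: unlift => //=; rewrite addbF. Qed.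

(** Where x and y agree, both sabotaged inputs show the same bit; the first
    position where they differ shows * on one and dagger on the other. *)
Lemma dt_answers_differ t x y :
  dt_eval t (sabotage x y symstar) != dt_eval t (sabotage x y symdag) ->
  exists2 k, (k < dt_cost t (sabotage x y symstar))%N &
             dt_answer t x k != dt_answer t y k.
Proof.
elim: t => [c|i f IH] /=; first by rewrite eqxx.
rewrite !ffunE; case: (eqVneq (x i) (y i)) => [eq_xy | ne_xy] ne_eval; last first.
  by exists 0%N.
by have [k lt_k ne_k] := IH _ ne_eval; exists k.+1; rewrite //= -eq_xy.
Qed.

Lemma dt_transcript_differ T t x y :
  dt_eval t (sabotage x y symstar) != dt_eval t (sabotage x y symdag) ->
  (dt_cost t (sabotage x y symstar) <= T)%N ->
  dt_transcript T t x T != dt_transcript T t y T.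
Proof.
case/dt_answers_differ => k lt_k ne_k le_cost.
have lt_kT : (k < T)%N := leq_trans lt_k le_cost.
apply: contra ne_k => /eqP/ffunP/(_ (Ordinal lt_kT)).
by rewrite !ffunE /= lt_kT => /eqP.
Qed.

End DecisionTreeRuns.

Section Simulation.
Variable R : realType.
Local Notation C := R[i].
Variables n T b : nat.
Variable tr : 'I_b.+1 -> dtree n.
Variable p : 'I_b.+1 -> R.

Definition sim_work := ('I_b.+1 * {ffun 'I_T -> bool})%type.
Definition sim_width := #|{: sim_work}|.
Local Notation S := (qspace n sim_width b).
Local Notation K := (kept_space n sim_width).

(** The value [ord0] of the workspace register is left for the initial state. *)
Definition encode_work (w : sim_work) : 'I_sim_width.+1 := lift ord0 (enum_rank w).

Lemma encode_work_inj : injective encode_work.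
Proof. by move=> w1 w2 /lift_inj /enum_rank_inj. Qed.

Definition record_bit (ans : {ffun 'I_T -> bool}) (s : nat) : bool :=
  if (insub s : option 'I_T) is Some u then ans u else false.

Lemma record_bit_transcript x v k s : (s < T)%N ->
  record_bit (dt_transcript T (tr v) x k) s = (s < k)%N && dt_answer (tr v) x s.
Proof. by move=> lt_sT; rewrite /record_bit insubT /= ffunE. Qed.

Definition sim_label x k v : K :=
  let ans := dt_transcript T (tr v) x k in
  ((dt_query (tr v) (record_bit ans) k, false), encode_work (v, ans)).

Definition sim_basis x k v : S := ((sim_label x k v).1, ((sim_label x k v).2, v)).

Lemma sim_basisK x k : cancel (sim_basis x k) (fun s => s.2.2).
Proof. by []. Qed.

(** Step [r] writes the oracle answer bit [c] into slot [r] of the record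
    (which held [false]), which clears [c], and moves the query register from
    query [r] to query [r+1]; this is done by a shift in Z/(n+1), so that the
    map stays injective on all basis states. *)
Definition sim_step (r : nat) (s : S) : S :=
  let: ((i, c), (k, v)) := s in
  match unlift ord0 k with
  | None => s
  | Some e =>
    let: (j, ans) := enum_val e in
    let ans' := [ffun u : 'I_T => if val u == r then ans u (+) c else ans u] in
    let c' := c (+) record_bit ans' r in
    let i' := i - dt_query (tr j) (record_bit ans') r
                + dt_query (tr j) (record_bit ans') r.+1 in
    ((i', c'), (encode_work (j, ans'), v))
  end.

Lemma sim_step_inj r : injective (sim_step r).
Proof.
move=> [[i1 c1] [k1 v1]] [[i2 c2] [k2 v2]] /=.
case: (unliftP ord0 k1) => [e1 ->|->]; case: (unliftP ord0 k2) => [e2 ->|->] //.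
- case V1: (enum_val e1) => [j1 ans1]; case V2: (enum_val e2) => [j2 ans2].
  move/pair_equal_spec => [/pair_equal_spec [Ei Ec] /pair_equal_spec [Ek <-]].
  case/encode_work_inj: Ek => eq_j Ea; subst j2.
  move: Ec; rewrite Ea => /addIb eq_c; subst c2.
  have eq_ans : ans1 = ans2.
    apply/ffunP => u; move/ffunP: Ea => /(_ u); rewrite !ffunE.
    by case: ifP => _ // /addIb.
  subst ans2; rewrite -V2 in V1; move/enum_val_inj: V1 => ->.
  by move: Ei => /addIr /subIr ->.
- case: (enum_val e1) => j1 ans1 /pair_equal_spec [_ /pair_equal_spec [/eqP]].
  by rewrite eq_sym (negbTE (neq_lift _ _)).
- case: (enum_val e2) => j2 ans2 /pair_equal_spec [_ /pair_equal_spec [/eqP]].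
  by rewrite (negbTE (neq_lift _ _)).
Qed.

Definition sim_basis0 v : S :=
  ((dt_query (tr v) (fun _ => false) 0, false), (encode_work (v, [ffun => false]), v)).

Lemma sim_basis_0 x v : sim_basis x 0 v = sim_basis0 v.
Proof.
rewrite /sim_basis /sim_basis0 /sim_label /=.
have -> : dt_transcript T (tr v) x 0 = [ffun => false].
  by apply/ffunP => u; rewrite !ffunE.
by case: (tr v).
Qed.

Definition amp v : C := (Num.sqrt (p v))%:C%C.
Definition zero_state : S := ((ord0, false), (ord0, ord0)).
Definition sim_init (s : S) : C := \sum_v (s == sim_basis0 v)%:R * amp v.

(** Reflecting through [|0> - sim_init] exchanges [|0>] and [sim_init]. *)
Definition sim_unitaries (t : nat) : S -> S -> C :=
  if t is t'.+1 then perm_op (sim_step t')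
  else reflection (fun s => (s == zero_state)%:R - sim_init s).

Hypothesis p_ge0 : forall v, 0 <= p v.
Hypothesis p_sum1 : \sum_v p v = 1.

Lemma conj_amp_amp v : Num.conj (amp v) * amp v = (p v)%:C%C.
Proof.
by rewrite /amp geC0_conj ?ler0c ?sqrtr_ge0 // -rmorphM -expr2 sqr_sqrtr.
Qed.

Lemma sim_init_norm : \sum_s Num.conj (sim_init s) * sim_init s = 1.
Proof.
have sigK : cancel sim_basis0 (fun s => s.2.2) by [].
rewrite /sim_init.
under eq_bigr => s _ do rewrite (superposition_single amp s sigK).
under eq_bigr => s _ do rewrite conj_delta_mul conj_amp_amp.
by rewrite (sum_superposition_single (fun v => (p v)%:C%C) sigK) -rmorph_sum p_sum1.
Qed.

Lemma sim_init_zero : sim_init zero_state = 0.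
Proof.
rewrite /sim_init (superposition_single amp zero_state (key := fun s => s.2.2)) //.
rewrite (_ : _ == _ = false) ?mul0r //.
by rewrite !xpair_eqE (negbTE (neq_lift _ _)) !andbF.
Qed.

Lemma sim_unitaries_unitary t : unitary (sim_unitaries t).
Proof.
case: t => [|t]; last exact/unitary_perm_op/sim_step_inj.
apply: unitary_reflection.
under eq_bigr => u _ do rewrite rmorphB rmorph_nat mulrBl !mulrBr.
rewrite !sumrB sum_delta (sum_delta sim_init) sim_init_zero eqxx sim_init_norm.
rewrite (eq_bigr (fun u => (u == zero_state)%:R * Num.conj (sim_init u))); last first.
  by move=> u _; rewrite mulrC.
by rewrite sum_delta sim_init_zero conjC0 !subr0 sub0r opprK.
Qed.

Lemma sim_init_state s :
  apply_op (sim_unitaries 0) (@init_state R n sim_width b) s = sim_init s.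
Proof.
rewrite /apply_op /init_state /=.
under eq_bigr => t _ do rewrite mulrC.
rewrite (sum_delta (fun t => reflection _ s t) zero_state) /reflection eqxx.
by rewrite sim_init_zero subr0 rmorph1 mulr1 opprB addrC subrK.
Qed.

Lemma sim_step_oracle x k v : (k < T)%N ->
  sim_step k (oracle_map x (sim_basis x k v)) = sim_basis x k.+1 v.
Proof.
move=> lt_kT.
set q := dt_query (tr v) (record_bit (dt_transcript T (tr v) x k)) k.
rewrite /sim_basis /sim_label oracle_mapE -/q /= /encode_work liftK enum_rankK /=.
have q_true : q = dt_query (tr v) (dt_answer (tr v) x) k.
  apply: dt_query_ext => s lt_sk; have lt_sT := ltn_trans lt_sk lt_kT.
  by rewrite record_bit_transcript ?lt_sk.
have -> : [ffun u : 'I_T => if val u == k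
             then dt_transcript T (tr v) x k u (+) oracle_bit x q
             else dt_transcript T (tr v) x k u] = dt_transcript T (tr v) x k.+1.
  apply/ffunP => u; rewrite !ffunE -[val u]/(nat_of_ord u).
  rewrite [(u < k.+1)%N]ltnS [(u <= k)%N]leq_eqVlt.
  case: eqP => [-> | _] //=.
  by rewrite ltnn /= q_true oracle_bit_dt_query.
have -> : dt_query (tr v) (record_bit (dt_transcript T (tr v) x k.+1)) k = q.
  apply: dt_query_ext => s lt_sk; have lt_sT := ltn_trans lt_sk lt_kT.
  by rewrite !record_bit_transcript // lt_sk ltnS ltnW.
rewrite record_bit_transcript // ltnSn q_true oracle_bit_dt_query.
by rewrite subrr add0r addbb.
Qed.

Lemma run_sim x k : (k <= T)%N ->
  forall s, run sim_unitaries x k s = \sum_v (s == sim_basis x k v)%:R * amp v.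
Proof.
elim: k => [|k IH] le_kT s /=.
  by rewrite sim_init_state; apply: eq_bigr => v _; rewrite sim_basis_0.
transitivity (apply_op (sim_unitaries k.+1)
   (fun u => \sum_v (u == oracle_map x (sim_basis x k v))%:R * amp v) s).
  apply: eq_bigr => u _; congr (_ * _).
  rewrite -(apply_perm_op (oracle_map x) (sim_basis x k) amp u).
  by apply: eq_bigr => w _; rewrite IH // ltnW.
rewrite (apply_perm_op (sim_step k) (fun v => oracle_map x (sim_basis x k v))).
by apply: eq_bigr => v _; rewrite sim_step_oracle.
Qed.

Local Notation rho x := (output_state sim_unitaries T x).

Lemma output_sim_entry x i j : rho x i j =
  \sum_c ((enum_val i == sim_label x T c) && (enum_val j == sim_label x T c))%:R
         * (p c)%:C%C.
Proof.
have label_eq (k : K) c : ((k.1, (k.2, c)) == sim_basis x T c) = (k == sim_label x T c).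
  by case: k => k1 k2; rewrite /sim_basis; case: (sim_label x T c) => l1 l2;
     rewrite !xpair_eqE eqxx andbT.
rewrite /output_state /reduced_state mxE; apply: eq_bigr => c _.
rewrite !(run_sim x (leqnn T)) !(superposition_single amp _ (sim_basisK x T)) /=.
rewrite !label_eq.
case: (enum_val i == _); case: (enum_val j == _);
  by rewrite ?mul1r ?mul0r ?rmorph0 ?mulr0 ?rmorph1 ?mul1r // mulrC conj_amp_amp.
Qed.

Lemma output_sim_offdiag x i j : i != j -> rho x i j = 0.
Proof.
move=> ne_ij; rewrite output_sim_entry big1 // => c _.
rewrite (_ : _ && _ = false) ?mul0r //; apply: contraNF ne_ij.
by case/andP => /eqP Ei /eqP Ej; apply/eqP/enum_val_inj; rewrite Ei Ej.
Qed.

Lemma output_sim_diag_ge0 x i : 0 <= rho x i i.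
Proof.
by rewrite output_sim_entry; apply: sumr_ge0 => c _; rewrite mulr_ge0 ?ler0n ?ler0c.
Qed.

Lemma sum_output_sim_diag x (B : pred K) :
  \sum_i (B (enum_val i))%:R * rho x i i = \sum_c (B (sim_label x T c))%:R * (p c)%:C%C.
Proof.
under eq_bigr => i _ do rewrite output_sim_entry mulr_sumr.
rewrite exchange_big /=; apply: eq_bigr => c _.
under eq_bigr => i _ do rewrite andbb mulrCA.
exact: (sum_enum_val_delta (fun k => (B k)%:R * (p c)%:C%C)).
Qed.

(** The difference of the two output states is diagonal, and no label of a
    separating tree on [x] occurs on [y]: summing the diagonal over these
    labels bounds the trace norm from below by their total weight. *)
Lemma trace_dist_sim_ge x y (good : pred 'I_b.+1) :
  (forall c, 0 < p c -> good c ->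
     dt_transcript T (tr c) x T != dt_transcript T (tr c) y T) ->
  ((\sum_(c | good c) p c) / 2)%:C%C <= trace_dist (rho x) (rho y).
Proof.
move=> ne_tr.
pose B : pred K := fun k => [exists c, [&& 0 < p c, good c & k == sim_label x T c]].
have B_x c : 0 < p c -> good c -> B (sim_label x T c).
  by move=> pc gc; apply/existsP; exists c; rewrite pc gc eqxx.
have B_y c : B (sim_label y T c) = false.
  apply/existsP => -[c' /and3P [pc' gc' /eqP /(congr1 snd)]].
  case/encode_work_inj => eq_c eq_tr.
  by move: eq_c eq_tr (ne_tr c' pc' gc') => <- ->; rewrite eqxx.
rewrite /trace_dist fmorph_div rmorph_nat ler_pM2r ?invr_gt0 ?ltr0n //.
have diff_diag i j : i != j -> (rho x - rho y) i j = 0.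
  by move=> ne_ij; rewrite submxE !output_sim_offdiag // subrr.
have diff_real i : (rho x - rho y) i i \is Num.real.
  by rewrite submxE; apply: rpredB; apply/ger0_real/output_sim_diag_ge0.
apply: le_trans (trace_norm_diag_ge (fun i => B (enum_val i)) diff_diag diff_real).
rewrite (eq_bigr (fun i => (B (enum_val i))%:R * rho x i i
                          - (B (enum_val i))%:R * rho y i i)); last first.
  by move=> i _; rewrite submxE mulrBr.
rewrite sumrB !sum_output_sim_diag [X in _ - X]big1 ?subr0; last first.
  by move=> c _; rewrite B_y mul0r.
rewrite rmorph_sum big_mkcond /=; apply: ler_sum => c _.
case: ifP => gc; last by rewrite mulr_ge0 ?ler0n ?ler0c.
have := p_ge0 c; rewrite le_eqVlt => /orP [/eqP <- | pc]; first by rewrite mulr0.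
by rewrite B_x ?mul1r.
Qed.

End Simulation.

Section Sabotage.
Variable n : nat.
Variable D : {set {ffun 'I_n -> bool}}.
Variable f : {ffun 'I_n -> bool} -> bool.
Implicit Types (x y : {ffun 'I_n -> bool}) (z : {ffun 'I_n -> sym}).

Lemma eq_symstar (s : sym) : (s == symstar) = if s is symstar then true else false.
Proof. by case: s; rewrite ?eqxx //; apply/negbTE/eqP. Qed.

Lemma sabotage_in_sab_domain x y : x \in D -> y \in D -> f x != f y ->
  sabotage x y symstar \in sab_domain D f /\ sabotage x y symdag \in sab_domain D f.
Proof.
move=> xD yD ne_fxy; split; rewrite inE; apply/existsP; exists x; rewrite xD /=;
  by apply/existsP; exists y; rewrite yD ne_fxy eqxx ?orbT.
Qed.

Lemma f_sab_sabotage_star x y : x != y -> f_sab (sabotage x y symstar).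
Proof.
move=> ne_xy; have [i ne_i] : exists i, x i != y i.
  apply/existsP; apply: contraNT ne_xy => /existsPn eq_xy.
  by apply/eqP/ffunP => i; apply/eqP; rewrite -[_ == _]negbK eq_xy.
by apply/existsP; exists i; rewrite ffunE (negbTE ne_i).
Qed.

Lemma f_sab_sabotage_dag x y : ~~ f_sab (sabotage x y symdag).
Proof.
by apply/existsPn => i; rewrite ffunE eq_symstar; case: (x i == y i); [case: (x i)|].
Qed.

Fixpoint scan (l : seq 'I_n) : dtree n :=
  match l with
  | [::] => Leaf n false
  | i :: l' => Query i (fun s => match s with
                                 | symstar => Leaf n true
                                 | symdag => Leaf n false
                                 | _ => scan l' end)
  end.

Lemma dt_eval_scan_nodag l z : (forall i, z i != symdag) ->
  dt_eval (scan l) z = has (fun i => z i == symstar) l.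
Proof.
move=> nodag; elim: l => [|i l IH] //=; rewrite eq_symstar.
by case E: (z i) => //=; move: (nodag i); rewrite E eqxx.
Qed.

Lemma dt_eval_scan_nostar l z :
  (forall i, z i != symstar) -> dt_eval (scan l) z = false.
Proof.
move=> nostar; elim: l => [|i l IH] //=.
by case E: (z i) => //=; move: (nostar i); rewrite E eqxx.
Qed.

Lemma dt_eval_scan z : z \in sab_domain D f -> dt_eval (scan (enum 'I_n)) z = f_sab z.
Proof.
rewrite inE => /existsP [x /andP [_ /existsP [y /andP [_ /andP [_ /orP [] /eqP ->]]]]].
- rewrite dt_eval_scan_nodag => [|i]; last first.
    by rewrite ffunE; case: ifP => _; [case: (x i) |]; apply/eqP.
  by apply/hasP/existsP => [[i _ star_i] | [i star_i]]; exists i; rewrite ?mem_enum.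
- rewrite dt_eval_scan_nostar => [|i]; last first.
    by rewrite ffunE; case: ifP => _; [case: (x i) |]; apply/eqP.
  exact/esym/negbTE/f_sab_sabotage_dag.
Qed.

Lemma zero_error_scan (R : realType) :
  zero_error_alg [:: ((1 : R), scan (enum 'I_n))] (sab_domain D f) (@f_sab n).
Proof.
split; [|split]; first by move=> q [<-|[]].
- by rewrite big_cons big_nil addr0.
- by move=> q [<-|[]] //= _ z; apply: dt_eval_scan.
Qed.

End Sabotage.

Lemma rand_alg_indexed (R : realType) n (A : rand_alg R n) : (0 < size A)%N ->
  exists b (tr : 'I_b.+1 -> dtree n) (p : 'I_b.+1 -> R),
    (forall v, List.In (p v, tr v) A) /\
    (forall F : R * dtree n -> R, \sum_(q <- A) F q = \sum_v F (p v, tr v)).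
Proof.
move=> A_gt0; have size_A : size A = (size A).-1.+1 by rewrite prednK.
pose d := ((0 : R), Leaf n false).
exists (size A).-1, (fun v => (nth d A v).2), (fun v => (nth d A v).1).
split=> [v | F] /=.
  by rewrite -surjective_pairing; apply: In_seq_nth; rewrite {2}size_A ltn_ord.
rewrite (big_nth d) {1}size_A big_mkord.
by apply: eq_bigr => v _; rewrite -surjective_pairing.
Qed.

Section QueryBound.
Variable R : realType.
Variable n : nat.
Variable D : {set {ffun 'I_n -> bool}}.
Variable f : {ffun 'I_n -> bool} -> bool.
Local Notation dom := (sab_domain D f).

Lemma QS_algorithm_exists_sim b (tr : 'I_b.+1 -> dtree n) (p : 'I_b.+1 -> R)
    (E : R) (T : nat) :
  (forall v, 0 <= p v) -> \sum_v p v = 1 ->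
  (forall v, 0 < p v -> forall z, z \in dom -> dt_eval (tr v) z = f_sab z) ->
  (forall z, z \in dom -> \sum_v p v * (dt_cost (tr v) z)%:R <= E) ->
  2 * E < T.+1%:R ->
  QS_algorithm_exists R D f T.
Proof.
move=> p_ge0 p_sum1 tr_ok cost_le lt_ET.
exists (sim_width T b), b, (@sim_unitaries R n T b tr p).
split=> [t _ | x y xD yD ne_fxy]; first exact: sim_unitaries_unitary.
have [starD dagD] := sabotage_in_sab_domain xD yD ne_fxy.
set z := sabotage x y symstar in starD.
have mass : 1 / 2 <= \sum_(v | (dt_cost (tr v) z <= T)%N) p v.
  exact: markov_half_mass p_ge0 p_sum1 (cost_le z starD) lt_ET.
have separated v : 0 < p v -> (dt_cost (tr v) z <= T)%N ->
    dt_transcript T (tr v) x T != dt_transcript T (tr v) y T.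
  move=> pv; apply: dt_transcript_differ.
  rewrite (tr_ok v pv _ starD) (tr_ok v pv _ dagD) (negbTE (f_sab_sabotage_dag _ _)).
  by rewrite f_sab_sabotage_star //; apply: contraNneq ne_fxy => ->.
apply: le_trans (trace_dist_sim_ge p_ge0 separated).
rewrite (_ : 1 / 6 = (1 / 6 : R)%:C%C) ?lecR; first lra.
by rewrite fmorph_div rmorph1 rmorph_nat.
Qed.

Lemma QS_algorithm_exists_of_zero_error (A : rand_alg R n) :
  zero_error_alg A dom (@f_sab n) ->
  QS_algorithm_exists R D f (Num.truncn (2 * worst_expected_cost A dom)).
Proof.
case=> A_ge0 [A_sum1 A_ok].
have [|b [tr [p [inA sumA]]]] := @rand_alg_indexed R n A.
  by case: A A_sum1 {A_ge0 A_ok} => //; rewrite big_nil => /esym/eqP; rewrite oner_eq0.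
apply: (@QS_algorithm_exists_sim b tr p (worst_expected_cost A dom)).
- by move=> v; apply: A_ge0 (inA v).
- by rewrite -A_sum1 (sumA fst).
- by move=> v pv; apply: A_ok (inA v) pv.
- move=> z zD; rewrite -(sumA (fun q => q.1 * (dt_cost q.2 z)%:R)).
  by rewrite -/(expected_cost A z); apply: le_bigmax_cond.
- exact: truncnS_gt.
Qed.

Lemma QS_le_nat (T : nat) : QS_algorithm_exists R D f T -> QS R D f <= T%:R.
Proof. by move=> HT; apply: ge_inf; [exists 0 => _ [t _ <-] | exists T]. Qed.

Lemma QS_le_2RS : QS R D f <= 2 * RS R D f.
Proof.
suff : QS R D f / 2 <= RS R D f by lra.
apply: lb_le_inf.
  by exists (worst_expected_cost [:: ((1 : R), scan (enum 'I_n))] dom);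
     exists [:: ((1 : R), scan (enum 'I_n))]; first exact: zero_error_scan.
move=> _ [A A_ok <-].
have E_ge0 : 0 <= worst_expected_cost A dom by apply: bigmax_ge_id.
have le_T : (Num.truncn (2 * worst_expected_cost A dom))%:R
            <= 2 * worst_expected_cost A dom by rewrite truncn_le mulr_ge0.
have := QS_le_nat (QS_algorithm_exists_of_zero_error A_ok); lra.
Qed.

End QueryBound.

Theorem corollary11 (R : realType) :
  exists c : R, 0 < c /\
    forall (n : nat) (D : {set {ffun 'I_n -> bool}})
           (f : {ffun 'I_n -> bool} -> bool),
      QS R D f <= c * RS R D f.
Proof. by exists 2; split=> // n D f; apply: QS_le_2RS. Qed.
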